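(* Let $(M,g)$ be a spherically symmetric spacetime and let $V\subset M$ be a region covered by comoving coordinates $(t,R,\theta,\psi)$ with $0\le t<T$ and $0\le R<R_b$, for some $T\in(0,+\infty]$ and $R_b>0$, in which \[ g=-e^{2\Phi}\,dt^2+e^{2\Psi}\,dR^2+r^2\,d\Omega^2,\qquad u=e^{-\Phi}\partial_t, \] where $\Phi,\Psi,r$ are functions of $(t,R)$ and $d\Omega^2=d\theta^2+\sin^2\theta\, d\psi^2$. Assume the coordinates are normalized so that $\Phi(t,R_b)=0$ and $r(0,R)=R$. Let $\sigma>0$ be a constant and let $(g,\rho,n,u,\phi)$ be a spherically symmetric solution on $V$ of the following system describing a pressureless fluid (dust, $p=0$) with energy density $\rho$, particle number density $n$ and four-velocity $u$, together with a scalar field $\phi$: \[ \nabla_\mu(\rho u^\mu)=\sigma n,\qquad \rho\, u^\mu\nabla_\mu u^\nu=0,\qquad \nabla_\mu(n u^\mu)=0, \] \[ R_{\mu\nu}-\tfrac12 g_{\mu\nu}\mathcal R+\phi\, g_{\mu\nu}=T_{\mu\nu},\qquad \nabla_\nu\phi=\sigma J_\nu, \] where $T^{\mu\nu}=\rho u^\mu u^\nu$, $J^\mu=n u^\mu$, $R_{\mu\nu}$ is the Ricci tensor and $\mathcal R$ the scalar curvature of $g$ (units $8\pi G=c=1$). Assume $\rho$ and $n$ are nowhere vanishing on $V$. Then $\rho$, $n$ and $\phi$ are functions of $t\in[0,T)$ only, and there exist a positive function $a:[0,T)\to(0,\infty)$ and a constant $k\in\mathbb R$ such that on $V$ \[ g=-dt^2+a(t)^2\Big(\frac{dR^2}{1-kR^2}+R^2d\Omega^2\Big),\qquad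 u=\partial_t. \]
   Context: The fluid is a perfect fluid with zero pressure; the system above is the projection (along $u$ and orthogonal to $u$) of the diffusion equation $\nabla_\mu T^{\mu\nu}=\sigma J^\nu$ with $p=0$, together with particle number conservation, the Einstein equations with the scalar field $\phi$ (whose energy-momentum tensor is $-\phi g_{\mu\nu}$), and the scalar field equation. Comoving coordinates are coordinates in which the fluid four-velocity is proportional to $\partial_t$; the center of symmetry is $r=0$. *)

From Stdlib Require Import Reals Lra.
From Coquelicot Require Import Coquelicot.
Open Scope R_scope.

(* A spacetime point in the chart: x 0 = t, x 1 = R, x 2 = theta, x 3 = psi. *)
Definition point := nat -> R.

Definition upd (x : point) (i : nat) (h : R) : point :=
  fun j => if Nat.eqb j i then h else x j.

Definition pd (f : point -> R) (i : nat) (x : point) : R :=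
  Derive (fun h => f (upd x i h)) (x i).

Definition sum4 (f : nat -> R) : R := sum_f_R0 f 3.

Definition metric := point -> nat -> nat -> R.

Definition Gamma (g gi : metric) (x : point) (a b c : nat) : R :=
  / 2 * sum4 (fun d => gi x a d *
     (pd (fun y => g y d c) b x + pd (fun y => g y d b) c x
      - pd (fun y => g y b c) d x)).

Definition Ricci (g gi : metric) (x : point) (b c : nat) : R :=
  sum4 (fun a =>
    pd (fun y => Gamma g gi y a b c) a x
    - pd (fun y => Gamma g gi y a b a) c x
    + sum4 (fun d => Gamma g gi x a a d * Gamma g gi x d b c
                     - Gamma g gi x a c d * Gamma g gi x d b a)).

Definition Scal (g gi : metric) (x : point) : R :=
  sum4 (fun b => sum4 (fun c => gi x b c * Ricci g gi x b c)).

Definition cov_div (g gi : metric) (V : point -> nat -> R) (x : point) : R :=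
  sum4 (fun m => pd (fun y => V y m) m x
                 + sum4 (fun l => Gamma g gi x m m l * V x l)).

Definition accel (g gi : metric) (u : point -> nat -> R) (x : point) (nu : nat) : R :=
  sum4 (fun m => u x m * pd (fun y => u y nu) m x
                 + sum4 (fun l => Gamma g gi x nu m l * u x m * u x l)).

Definition lower (g : metric) (V : point -> nat -> R) (x : point) (m : nat) : R :=
  sum4 (fun a => g x m a * V x a).

Definition gSph (Phi Psi r : R -> R -> R) : metric :=
  fun x m n =>
    match m, n with
    | 0, 0 => - exp (2 * Phi (x 0%nat) (x 1%nat))
    | 1, 1 => exp (2 * Psi (x 0%nat) (x 1%nat))
    | 2, 2 => (r (x 0%nat) (x 1%nat)) ^ 2
    | 3, 3 => (r (x 0%nat) (x 1%nat)) ^ 2 * (sin (x 2%nat)) ^ 2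
    | _, _ => 0
    end.

Definition gSphInv (Phi Psi r : R -> R -> R) : metric :=
  fun x m n =>
    match m, n with
    | 0, 0 => - exp (- (2 * Phi (x 0%nat) (x 1%nat)))
    | 1, 1 => exp (- (2 * Psi (x 0%nat) (x 1%nat)))
    | 2, 2 => / (r (x 0%nat) (x 1%nat)) ^ 2
    | 3, 3 => / ((r (x 0%nat) (x 1%nat)) ^ 2 * (sin (x 2%nat)) ^ 2)
    | _, _ => 0
    end.

Definition uSph (Phi : R -> R -> R) : point -> nat -> R :=
  fun x m => match m with
             | 0 => exp (- Phi (x 0%nat) (x 1%nat))
             | _ => 0
             end.

Definition lift (f : R -> R -> R) : point -> R := fun x => f (x 0%nat) (x 1%nat).

Definition gFLRW (a : R -> R) (k : R) : metric :=
  fun x m n =>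
    match m, n with
    | 0, 0 => -1
    | 1, 1 => (a (x 0%nat)) ^ 2 / (1 - k * (x 1%nat) ^ 2)
    | 2, 2 => (a (x 0%nat)) ^ 2 * (x 1%nat) ^ 2
    | 3, 3 => (a (x 0%nat)) ^ 2 * (x 1%nat) ^ 2 * (sin (x 2%nat)) ^ 2
    | _, _ => 0
    end.

Definition uStatic : point -> nat -> R :=
  fun x m => match m with 0 => 1 | _ => 0 end.

Definition d_t (f : R -> R -> R) : R -> R -> R := fun t y => Derive (fun s => f s y) t.
Definition d_R (f : R -> R -> R) : R -> R -> R := fun t y => Derive (fun s => f t s) y.

Fixpoint Ck (k : nat) (f : R -> R -> R) (U : R -> R -> Prop) : Prop :=
  match k with
  | O => forall t y, U t y -> continuity_2d_pt f t y
  | S k' => (forall t y, U t y ->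
               ex_derive (fun s => f s y) t /\ ex_derive (fun s => f t s) y)
            /\ Ck k' f U /\ Ck k' (d_t f) U /\ Ck k' (d_R f) U
  end.

Definition smooth_on (f : R -> R -> R) (U : R -> R -> Prop) : Prop :=
  forall k, Ck k f U.

Definition open2 (U : R -> R -> Prop) : Prop :=
  forall t y, U t y -> exists eps, 0 < eps /\
    forall t' y', Rabs (t' - t) < eps -> Rabs (y' - y) < eps -> U t' y'.

From Stdlib Require Import Reals Lra Lia.
From Coquelicot Require Import Coquelicot.
Open Scope R_scope.
Set Bullet Behavior "Strict Subproofs".

(* The radial component of the geodesic equation forces [d_R Phi = 0], so with the
   boundary normalization the lapse vanishes and [u = d_t]. The scalar field equation
   then gives [d_R phi = 0] and [d_t phi = - sigma n], so [phi] and [n] depend on [t]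
   only. Particle conservation makes [n e^Psi r^2] constant in time; together with the
   [01] Einstein equation [d_R d_t r = d_t Psi d_R r] it makes [n r^3] constant in time,
   whence [r = a(t) R] and [e^Psi = a(t) e^Psi(0,R)]. Equating the [11] and [22] Einstein
   equations gives [R d_R Psi(0,R) = e^(2 Psi(0,R)) - 1], i.e. [e^(-2 Psi(0,R)) = 1 - k R^2],
   and the [00] equation expresses [rho] through [a], its derivatives and [k] alone. Everything is derived on
   the equator [theta = PI/2] of the open chart and extended to [t = 0], [R = 0] by
   continuity. *)

Lemma continuity_2d_pt_fst (f : R -> R -> R) t y :
  continuity_2d_pt f t y -> continuity_pt (fun s => f s y) t.
Proof.
  intros Hf eps Heps. destruct (Hf (mkposreal eps Heps)) as [d Hd].
  exists d. split; [apply cond_pos|]. intros s [_ Hs]; simpl in *; unfold R_dist in *.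
  apply Hd; [exact Hs | rewrite Rminus_diag, Rabs_R0; apply cond_pos].
Qed.

Lemma continuity_2d_pt_snd (f : R -> R -> R) t y :
  continuity_2d_pt f t y -> continuity_pt (fun s => f t s) y.
Proof.
  intros Hf eps Heps. destruct (Hf (mkposreal eps Heps)) as [d Hd].
  exists d. split; [apply cond_pos|]. intros s [_ Hs]; simpl in *; unfold R_dist in *.
  apply Hd; [rewrite Rminus_diag, Rabs_R0; apply cond_pos | exact Hs].
Qed.

Lemma ex_derive_continuity_pt (f : R -> R) x : ex_derive f x -> continuity_pt f x.
Proof. intros Hf. apply continuity_pt_filterlim, (ex_derive_continuous f x Hf). Qed.

Lemma Derive_0_is_derive (f : R -> R) x : ex_derive f x -> Derive f x = 0 -> is_derive f x 0.
Proof. intros Hf Hd. rewrite <- Hd. apply Derive_correct, Hf. Qed.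

Lemma null_derivative_eq (f : R -> R) a b : a < b ->
  (forall x, a < x < b -> is_derive f x 0) ->
  (forall x, a <= x <= b -> continuity_pt f x) -> f a = f b.
Proof.
  intros Hab Hd Hc.
  destruct (MVT_gen f a b (fun _ => 0)) as [c [_ Hfc]];
    rewrite ?Rmin_left, ?Rmax_right by lra; auto; lra.
Qed.

Lemma null_derivative_open (f : R -> R) a b :
  (forall x, a < x < b -> is_derive f x 0) ->
  forall u v, a < u < b -> a < v < b -> f u = f v.
Proof.
  intros Hd.
  assert (Hc : forall x, a < x < b -> continuity_pt f x).
  { intros x Hx. apply ex_derive_continuity_pt. eexists; eauto. }
  assert (Hle : forall u v, a < u < b -> a < v < b -> u < v -> f u = f v).
  { intros u v Hu Hv Huv.
    apply null_derivative_eq; [exact Huv | intros x Hx; apply Hd | intros x Hx; apply Hc]; lra. }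
  intros u v Hu Hv. destruct (Rtotal_order u v) as [H|[H|H]].
  - auto.
  - subst; reflexivity.
  - symmetry; auto.
Qed.

Lemma eq_at_right_limit (f g : R -> R) a beta :
  continuity_pt f a -> continuity_pt g a -> 0 < beta ->
  (forall x, a < x < a + beta -> f x = g x) -> f a = g a.
Proof.
  intros Hf Hg Hb Hfg. apply continuity_pt_filterlim in Hf, Hg.
  apply (filterlim_locally_unique (F := at_right a) f).
  - eapply filterlim_filter_le_1; [apply filter_le_within | exact Hf].
  - apply (filterlim_ext_loc g).
    + exists (mkposreal _ Hb). intros x Hx Hax. symmetry. apply Hfg.
      apply Rabs_def2 in Hx; simpl in Hx. unfold minus, plus, opp in Hx; simpl in Hx. lra.
    + eapply filterlim_filter_le_1; [apply filter_le_within | exact Hg].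
Qed.

Lemma locally_open_interval a b x : a < x < b -> locally x (fun h => a < h < b).
Proof.
  intros Hx. assert (He : 0 < Rmin (x - a) (b - x)) by (apply Rmin_pos; lra).
  exists (mkposreal _ He). intros h Hh. apply Rabs_def2 in Hh; simpl in Hh.
  unfold minus, plus, opp in Hh; simpl in Hh.
  generalize (Rmin_l (x - a) (b - x)) (Rmin_r (x - a) (b - x)). lra.
Qed.

Lemma locally_pos_Rbar_lt (T : Rbar) t : 0 < t -> Rbar_lt t T ->
  locally t (fun h => 0 < h /\ Rbar_lt h T).
Proof.
  intros Ht HT. destruct T as [T| |]; simpl in HT; [| |contradiction].
  - generalize (locally_open_interval 0 T t (conj Ht HT)). apply filter_imp. simpl; tauto.
  - generalize (locally_open_interval 0 (t + 1) t (conj Ht (Rlt_plus_1 t))).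
    apply filter_imp. simpl; tauto.
Qed.

Lemma Rbar_lt_right_interval (T : Rbar) (t : R) : Rbar_lt t T ->
  exists beta, 0 < beta /\ forall u, t <= u < t + beta -> Rbar_lt u T.
Proof.
  intros HT. destruct T as [T| |]; simpl in HT; [| |contradiction].
  - exists (T - t). split; [lra|]. intros u Hu; simpl; lra.
  - exists 1. split; [lra|]. intros; exact I.
Qed.

Lemma Rbar_lt_le_compat (T : Rbar) s t : s <= t -> Rbar_lt t T -> Rbar_lt s T.
Proof. intros Hst. apply (Rbar_le_lt_trans s t T Hst). Qed.

Lemma pow3_inj x y : 0 < x -> 0 < y -> x ^ 3 = y ^ 3 -> x = y.
Proof.
  intros Hx Hy E. destruct (Rtotal_order x y) as [H|[H|H]]; [|exact H|].
  - assert (x * x < y * y) by nra. nra.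
  - assert (y * y < x * x) by nra. nra.
Qed.

Section SmoothOn.
Variables (f : R -> R -> R) (U : R -> R -> Prop) (t y : R).
Hypotheses (Hf : smooth_on f U) (HU : U t y).

Lemma smooth_ex_derive_t : ex_derive (fun s => f s y) t.
Proof. exact (proj1 (proj1 (Hf 1%nat) t y HU)). Qed.
Lemma smooth_ex_derive_R : ex_derive (fun s => f t s) y.
Proof. exact (proj2 (proj1 (Hf 1%nat) t y HU)). Qed.
Lemma smooth_ex_derive_tt : ex_derive (fun s => d_t f s y) t.
Proof. destruct (Hf 2%nat) as [_ [_ [[H _] _]]]. exact (proj1 (H t y HU)). Qed.
Lemma smooth_ex_derive_tR : ex_derive (fun s => d_t f t s) y.
Proof. destruct (Hf 2%nat) as [_ [_ [[H _] _]]]. exact (proj2 (H t y HU)). Qed.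
Lemma smooth_ex_derive_Rt : ex_derive (fun s => d_R f s y) t.
Proof. destruct (Hf 2%nat) as [_ [_ [_ [H _]]]]. exact (proj1 (H t y HU)). Qed.
Lemma smooth_ex_derive_RR : ex_derive (fun s => d_R f t s) y.
Proof. destruct (Hf 2%nat) as [_ [_ [_ [H _]]]]. exact (proj2 (H t y HU)). Qed.
Lemma smooth_continuity_2d : continuity_2d_pt f t y.
Proof. exact (Hf 0%nat t y HU). Qed.

End SmoothOn.

(* Christoffel symbols of [gSph Phi Psi r] at a point where [Phi] and its first derivatives vanish. *)
Definition GammaSph (Psi r : R -> R -> R) (y : point) (a b c : nat) : R :=
  let t := y 0%nat in let rad := y 1%nat in let th := y 2%nat in
  match a, b, c with
  | 0, 1, 1 => d_t Psi t rad * exp (2 * Psi t rad)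
  | 0, 2, 2 => r t rad * d_t r t rad
  | 0, 3, 3 => r t rad * d_t r t rad * sin th ^ 2
  | 1, 0, 1 | 1, 1, 0 => d_t Psi t rad
  | 1, 1, 1 => d_R Psi t rad
  | 1, 2, 2 => - (r t rad * d_R r t rad) / exp (2 * Psi t rad)
  | 1, 3, 3 => - (r t rad * d_R r t rad) * sin th ^ 2 / exp (2 * Psi t rad)
  | 2, 0, 2 | 2, 2, 0 | 3, 0, 3 | 3, 3, 0 => d_t r t rad / r t rad
  | 2, 1, 2 | 2, 2, 1 | 3, 1, 3 | 3, 3, 1 => d_R r t rad / r t rad
  | 2, 3, 3 => - (sin th * cos th)
  | 3, 2, 3 | 3, 3, 2 => cos th / sin th
  | _, _, _ => 0
  end.

Section ChristoffelSph.
Variables (Phi Psi r : R -> R -> R) (y : point).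
Local Notation t := (y 0%nat).
Local Notation rad := (y 1%nat).
Hypotheses (HPhi : Phi t rad = 0) (HPhi_t : d_t Phi t rad = 0) (HPhi_R : d_R Phi t rad = 0).
Hypotheses (Hr : r t rad <> 0) (Hsin : sin (y 2%nat) <> 0).
Hypotheses (DPhi_t : ex_derive (fun s => Phi s rad) t) (DPhi_R : ex_derive (fun s => Phi t s) rad).
Hypotheses (DPsi_t : ex_derive (fun s => Psi s rad) t) (DPsi_R : ex_derive (fun s => Psi t s) rad).
Hypotheses (Dr_t : ex_derive (fun s => r s rad) t) (Dr_R : ex_derive (fun s => r t s) rad).

Let dgSph (d c b : nat) : R :=
  match d, c, b with
  | 1, 1, 0 => 2 * d_t Psi t rad * exp (2 * Psi t rad)
  | 1, 1, 1 => 2 * d_R Psi t rad * exp (2 * Psi t rad)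
  | 2, 2, 0 => 2 * r t rad * d_t r t rad
  | 2, 2, 1 => 2 * r t rad * d_R r t rad
  | 3, 3, 0 => 2 * r t rad * d_t r t rad * sin (y 2%nat) ^ 2
  | 3, 3, 1 => 2 * r t rad * d_R r t rad * sin (y 2%nat) ^ 2
  | 3, 3, 2 => 2 * r t rad ^ 2 * sin (y 2%nat) * cos (y 2%nat)
  | _, _, _ => 0
  end.

Lemma pd_gSph d c b : pd (fun z => gSph Phi Psi r z d c) b y = dgSph d c b.
Proof.
  unfold pd, upd, gSph, dgSph, d_t, d_R in *.
  destruct d as [|[|[|[|d]]]]; destruct c as [|[|[|[|c]]]]; simpl;
    try apply Derive_const;
    destruct b as [|[|[|[|b]]]]; simpl; try apply Derive_const;
    apply is_derive_unique; auto_derive; auto; try ring;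
    rewrite ?HPhi_t, ?HPhi_R; ring.
Qed.

Lemma Gamma_gSph a b c : Gamma (gSph Phi Psi r) (gSphInv Phi Psi r) y a b c = GammaSph Psi r y a b c.
Proof.
  unfold Gamma, sum4, sum_f_R0. rewrite !pd_gSph.
  unfold gSphInv, GammaSph, dgSph. rewrite HPhi.
  pose proof (exp_neq_0 (2 * Psi (y 0%nat) (y 1%nat))).
  destruct a as [|[|[|[|a]]]]; destruct b as [|[|[|[|b]]]]; destruct c as [|[|[|[|c]]]]; simpl;
    rewrite ?Rmult_0_r, ?Ropp_0, ?exp_0; try field; auto;
    rewrite exp_Ropp; field; auto.
Qed.

End ChristoffelSph.

Definition RicSph00 (Psi r : R -> R -> R) t R :=
  - (d_t (d_t Psi) t R + d_t Psi t R ^ 2) - 2 * d_t (d_t r) t R / r t R.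
Definition RicSph01 (Psi r : R -> R -> R) t R :=
  - 2 * (d_R (d_t r) t R - d_t Psi t R * d_R r t R) / r t R.
Definition RicSph11 (Psi r : R -> R -> R) t R :=
  exp (2 * Psi t R) * (d_t (d_t Psi) t R + d_t Psi t R ^ 2 + 2 * d_t Psi t R * d_t r t R / r t R)
  - 2 * (d_R (d_R r) t R - d_R Psi t R * d_R r t R) / r t R.
Definition RicSph22 (Psi r : R -> R -> R) t R :=
  r t R * d_t (d_t r) t R + d_t r t R ^ 2 + 1 + r t R * d_t r t R * d_t Psi t R
  - (r t R * d_R (d_R r) t R + d_R r t R ^ 2 - r t R * d_R r t R * d_R Psi t R)
    / exp (2 * Psi t R).

Section RicciSph.
Variables (Phi Psi r : R -> R -> R) (P : point -> Prop).
Hypothesis P_open : forall x e, P x -> locally (x e) (fun h => P (upd x e h)).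
Hypothesis Gamma_P : forall z a b c, P z ->
  Gamma (gSph Phi Psi r) (gSphInv Phi Psi r) z a b c = GammaSph Psi r z a b c.

Lemma pd_Gamma_gSph x a b c e : P x ->
  pd (fun z => Gamma (gSph Phi Psi r) (gSphInv Phi Psi r) z a b c) e x
  = pd (fun z => GammaSph Psi r z a b c) e x.
Proof.
  intros Hx. apply Derive_ext_loc.
  generalize (P_open x e Hx). apply filter_imp. intros h Hh. apply Gamma_P, Hh.
Qed.

Variable x : point.
Local Notation t := (x 0%nat).
Local Notation rad := (x 1%nat).
Hypotheses (Hx : P x) (Hequator : x 2%nat = PI / 2) (Hr : r t rad <> 0).
Hypotheses (DPsi_t : ex_derive (fun s => Psi s rad) t) (DPsi_R : ex_derive (fun s => Psi t s) rad).
Hypotheses (Dr_t : ex_derive (fun s => r s rad) t) (Dr_R : ex_derive (fun s => r t s) rad).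
Hypotheses (DPsi_tt : ex_derive (fun s => d_t Psi s rad) t)
  (DPsi_tR : ex_derive (fun s => d_t Psi t s) rad).
Hypotheses (DPsi_Rt : ex_derive (fun s => d_R Psi s rad) t)
  (DPsi_RR : ex_derive (fun s => d_R Psi t s) rad).
Hypotheses (Dr_tt : ex_derive (fun s => d_t r s rad) t) (Dr_tR : ex_derive (fun s => d_t r t s) rad).
Hypotheses (Dr_Rt : ex_derive (fun s => d_R r s rad) t) (Dr_RR : ex_derive (fun s => d_R r t s) rad).

Let sin_equator : sin (x 2%nat) <> 0.
Proof. rewrite Hequator, sin_PI2; lra. Qed.

Local Ltac eval_pd_GammaSph :=
  match goal with |- context [pd (fun z => GammaSph Psi r z ?a ?b ?c) ?e x] =>
    let v := fresh "v" in evar (v : R);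
    let H := fresh in
    assert (H : pd (fun z => GammaSph Psi r z a b c) e x = v);
    [ subst v; unfold pd, upd, GammaSph; simpl;
      apply is_derive_unique; auto_derive;
      [ repeat split; auto using sin_equator, exp_neq_0 | reflexivity ]
    | rewrite H; subst v; clear H ]
  end.

Local Ltac compute_Ricci :=
  unfold Ricci, sum4, sum_f_R0;
  rewrite !pd_Gamma_gSph by exact Hx; rewrite !Gamma_P by exact Hx;
  repeat eval_pd_GammaSph; unfold GammaSph; simpl;
  unfold RicSph00, RicSph01, RicSph11, RicSph22, d_t, d_R;
  rewrite ?Hequator, ?sin_PI2, ?cos_PI2;
  pose proof (exp_neq_0 (2 * Psi t rad)); field; auto.

Lemma Ricci_gSph_00 : Ricci (gSph Phi Psi r) (gSphInv Phi Psi r) x 0 0 = RicSph00 Psi r t rad.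
Proof. compute_Ricci. Qed.

Lemma Ricci_gSph_01 : Ricci (gSph Phi Psi r) (gSphInv Phi Psi r) x 0 1 = RicSph01 Psi r t rad.
Proof. compute_Ricci. Qed.

Lemma Ricci_gSph_11 : Ricci (gSph Phi Psi r) (gSphInv Phi Psi r) x 1 1 = RicSph11 Psi r t rad.
Proof. compute_Ricci. Qed.

Lemma Ricci_gSph_22 : Ricci (gSph Phi Psi r) (gSphInv Phi Psi r) x 2 2 = RicSph22 Psi r t rad.
Proof. compute_Ricci. Qed.

End RicciSph.

Lemma accel_gSph_1 (Phi Psi r : R -> R -> R) (y : point) :
  ex_derive (fun s => Phi (y 0%nat) s) (y 1%nat) ->
  accel (gSph Phi Psi r) (gSphInv Phi Psi r) (uSph Phi) y 1
  = exp (- (2 * Psi (y 0%nat) (y 1%nat))) * d_R Phi (y 0%nat) (y 1%nat).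
Proof.
  intros HD. unfold accel, Gamma, sum4, sum_f_R0, uSph, gSphInv, gSph, pd, upd; simpl.
  rewrite !Derive_const.
  replace (Derive (fun h => - exp (2 * Phi (y 0%nat) h)) (y 1%nat))
    with (- (2 * d_R Phi (y 0%nat) (y 1%nat) * exp (2 * Phi (y 0%nat) (y 1%nat)))).
  2:{ symmetry. apply is_derive_unique. auto_derive; [exact HD | unfold d_R; ring]. }
  replace (exp (2 * Phi (y 0%nat) (y 1%nat)))
    with (/ (exp (- Phi (y 0%nat) (y 1%nat)) * exp (- Phi (y 0%nat) (y 1%nat)))).
  - field. apply exp_neq_0.
  - rewrite <- exp_plus, <- exp_Ropp. f_equal. ring.
Qed.

Lemma solve_half_scalar a E S p : E <> 0 -> a - / 2 * E * S + p * E = 0 -> / 2 * S = a / E + p.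
Proof. intros HE H. apply (Rmult_eq_reg_r E); [|exact HE]. field_simplify; [lra | exact HE]. Qed.

Definition equator_pt (t R : R) : point :=
  fun i => match i with 0%nat => t | 1%nat => R | _ => PI / 2 end.

Lemma PI2_bounds : 0 < PI / 2 < PI.
Proof. generalize PI_RGT_0; lra. Qed.

Section DustFLRW.
Variables (T : Rbar) (Rb sigma : R) (Phi Psi r rho n phi : R -> R -> R) (U : R -> R -> Prop).
Hypotheses (HT : Rbar_lt 0 T) (HRb : 0 < Rb) (Hsigma : 0 < sigma).
Hypothesis HU : forall t R, 0 <= t -> Rbar_lt t T -> 0 <= R <= Rb -> U t R.
Hypotheses (sPhi : smooth_on Phi U) (sPsi : smooth_on Psi U) (sr : smooth_on r U).
Hypotheses (srho : smooth_on rho U) (sn : smooth_on n U) (sphi : smooth_on phi U).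
Hypothesis r_pos : forall t R, 0 <= t -> Rbar_lt t T -> 0 < R < Rb -> 0 < r t R.
Hypothesis Phi_boundary : forall t, 0 <= t -> Rbar_lt t T -> Phi t Rb = 0.
Hypothesis r_initial : forall R, 0 <= R < Rb -> r 0 R = R.
Hypothesis rho_n_neq0 : forall t R, 0 <= t -> Rbar_lt t T -> 0 <= R < Rb -> rho t R <> 0 /\ n t R <> 0.
Hypothesis field_eqs : forall x : point,
      0 < x 0%nat -> Rbar_lt (x 0%nat) T -> 0 < x 1%nat < Rb -> 0 < x 2%nat < PI ->
      let g := gSph Phi Psi r in
      let gi := gSphInv Phi Psi r in
      let u := uSph Phi in
      cov_div g gi (fun y m => lift rho y * u y m) x = sigma * lift n x /\
      (forall nu, (nu <= 3)%nat -> lift rho x * accel g gi u x nu = 0) /\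
      cov_div g gi (fun y m => lift n y * u y m) x = 0 /\
      (forall m nu, (m <= 3)%nat -> (nu <= 3)%nat ->
         Ricci g gi x m nu - / 2 * g x m nu * Scal g gi x + lift phi x * g x m nu
         = lift rho x * lower g u x m * lower g u x nu) /\
      (forall nu, (nu <= 3)%nat ->
         pd (lift phi) nu x = sigma * lower g (fun y m => lift n y * u y m) x nu).

Definition inside t R := 0 < t /\ Rbar_lt t T /\ 0 < R < Rb.

Lemma inside_U t R : inside t R -> U t R.
Proof. intros (? & ? & ?). apply HU; auto; lra. Qed.

Lemma inside_r_pos t R : inside t R -> 0 < r t R.
Proof. intros (? & ? & ?). apply r_pos; auto; lra. Qed.

Local Ltac in_U := first [ apply inside_U; assumption | apply HU; (assumption || lra) ].

Local Ltac smooth_ex_derive := match goal with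
  | |- ex_derive (fun h => d_t ?f h ?y) ?x => apply (smooth_ex_derive_tt f U); [assumption | in_U]
  | |- ex_derive (fun h => d_t ?f ?x h) ?y => apply (smooth_ex_derive_tR f U); [assumption | in_U]
  | |- ex_derive (fun h => d_R ?f h ?y) ?x => apply (smooth_ex_derive_Rt f U); [assumption | in_U]
  | |- ex_derive (fun h => d_R ?f ?x h) ?y => apply (smooth_ex_derive_RR f U); [assumption | in_U]
  | |- ex_derive (fun h => ?f h ?y) ?x => apply (smooth_ex_derive_t f U); [assumption | in_U]
  | |- ex_derive (fun h => ?f ?x h) ?y => apply (smooth_ex_derive_R f U); [assumption | in_U]
  end.

Local Ltac field_eqs_at HO :=
  let HE := fresh "HE" in
  pose proof (field_eqs (equator_pt _ _) (proj1 HO) (proj1 (proj2 HO)) (proj2 (proj2 HO)) PI2_bounds)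
    as HE; cbv zeta in HE.

Lemma dR_Phi_inside t R : inside t R -> d_R Phi t R = 0.
Proof.
  intros HO. field_eqs_at HO. destruct HE as [_ [Hacc _]].
  specialize (Hacc 1%nat ltac:(lia)).
  rewrite accel_gSph_1 in Hacc by smooth_ex_derive. unfold lift in Hacc; simpl in Hacc.
  destruct HO as (H1 & H2 & H3).
  destruct (rho_n_neq0 t R ltac:(lra) H2 ltac:(lra)) as [Hrho _].
  apply Rmult_integral in Hacc as [Hacc|Hacc]; [contradiction|].
  apply Rmult_integral in Hacc as [Hacc|Hacc]; [|exact Hacc].
  exfalso. exact (exp_neq_0 _ Hacc).
Qed.

Lemma Phi_vanishes_pos t R : 0 < t -> Rbar_lt t T -> 0 <= R <= Rb -> Phi t R = 0.
Proof.
  intros H1 H2 H3. destruct (Req_dec R Rb) as [->|E]; [apply Phi_boundary; auto; lra|].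
  rewrite <- (Phi_boundary t) by (auto; lra).
  apply (null_derivative_eq (fun v => Phi t v)); [lra| |].
  - intros v Hv. apply Derive_0_is_derive; [smooth_ex_derive|].
    apply dR_Phi_inside. repeat split; auto; lra.
  - intros v Hv. apply continuity_2d_pt_snd, (smooth_continuity_2d _ U); [assumption | in_U].
Qed.

Lemma Phi_vanishes t R : 0 <= t -> Rbar_lt t T -> 0 <= R <= Rb -> Phi t R = 0.
Proof.
  intros H1 H2 H3. destruct (Req_dec t 0) as [->|E]; [|apply Phi_vanishes_pos; auto; lra].
  destruct (Rbar_lt_right_interval T 0 H2) as [beta [Hb Hbt]].
  apply (eq_at_right_limit (fun u => Phi u R) (fun _ => 0) 0 beta);
    [| apply continuity_pt_const; now intros ? ? | exact Hb |].
  - apply continuity_2d_pt_fst, (smooth_continuity_2d _ U); [assumption | in_U].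
  - intros u Hu. apply Phi_vanishes_pos; [lra | apply Hbt; lra | exact H3].
Qed.

Lemma inside_Phi0 t R : inside t R -> Phi t R = 0.
Proof. intros (? & ? & ?). apply Phi_vanishes; auto; lra. Qed.

Lemma dt_Phi_inside t R : inside t R -> d_t Phi t R = 0.
Proof.
  intros (H1 & H2 & H3). unfold d_t. rewrite (Derive_ext_loc _ (fun _ => 0)); [apply Derive_const|].
  generalize (locally_pos_Rbar_lt T t H1 H2). apply filter_imp.
  intros h [Hh1 Hh2]. apply Phi_vanishes; auto; lra.
Qed.

Definition equatorial_region (z : point) := inside (z 0%nat) (z 1%nat) /\ 0 < z 2%nat < PI.

Lemma equatorial_region_open x e : equatorial_region x ->
  locally (x e) (fun h => equatorial_region (upd x e h)).
Proof.
  intros [(H1 & H2 & H3) H4]. unfold equatorial_region, inside, upd.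
  destruct e as [|[|[|e]]]; simpl.
  - generalize (locally_pos_Rbar_lt T _ H1 H2). apply filter_imp. tauto.
  - generalize (locally_open_interval _ _ _ H3). apply filter_imp. tauto.
  - generalize (locally_open_interval _ _ _ H4). apply filter_imp. tauto.
  - apply filter_forall. tauto.
Qed.

Lemma Gamma_gSph_equatorial z a b c : equatorial_region z ->
  Gamma (gSph Phi Psi r) (gSphInv Phi Psi r) z a b c = GammaSph Psi r z a b c.
Proof.
  intros [HO Hth]. apply Gamma_gSph;
    first [ now apply inside_Phi0 | now apply dt_Phi_inside | now apply dR_Phi_inside
          | apply Rgt_not_eq; now apply inside_r_pos | apply Rgt_not_eq, sin_gt_0; lra
          | smooth_ex_derive ].
Qed.

Local Ltac equatorial_side_condition :=
  first [ exact equatorial_region_open | exact Gamma_gSph_equatorial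
        | split; [assumption | exact PI2_bounds] | reflexivity
        | apply Rgt_not_eq, inside_r_pos; assumption | smooth_ex_derive ].

Lemma phi_equations t R : inside t R -> d_R phi t R = 0 /\ d_t phi t R = - sigma * n t R.
Proof.
  intros HO. field_eqs_at HO. destruct HE as (_ & _ & _ & _ & Hphi).
  assert (H0 := Hphi 0%nat ltac:(lia)). assert (H1 := Hphi 1%nat ltac:(lia)).
  unfold lower, sum4, sum_f_R0, gSph, uSph, lift, pd, upd in H0, H1; simpl in H0, H1.
  rewrite (inside_Phi0 t R HO), Rmult_0_r, exp_0, Ropp_0, exp_0 in H0.
  unfold d_t, d_R. split; [rewrite H1 | rewrite H0]; ring.
Qed.

Lemma n_conservation t R : inside t R ->
  d_t n t R + n t R * (d_t Psi t R + 2 * d_t r t R / r t R) = 0.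
Proof.
  intros HO. field_eqs_at HO. destruct HE as (_ & _ & Hn & _).
  assert (Hp0 := inside_Phi0 t R HO). assert (Hpt := dt_Phi_inside t R HO).
  unfold cov_div, sum4, sum_f_R0 in Hn.
  rewrite !Gamma_gSph_equatorial in Hn by equatorial_side_condition.
  unfold GammaSph, uSph, lift, pd, upd in Hn; simpl in Hn.
  replace (Derive (fun h => n h R * exp (- Phi h R)) t) with (d_t n t R) in Hn.
  2:{ symmetry. apply is_derive_unique. auto_derive.
      - repeat split; smooth_ex_derive.
      - unfold d_t in *. rewrite Hpt, Hp0, Ropp_0, exp_0. ring. }
  rewrite !(Derive_ext (fun h => _ * 0) (fun _ => 0)), !Derive_const in Hn by (intros; ring).
  rewrite Hp0, Ropp_0, exp_0, sin_PI2, cos_PI2 in Hn.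
  rewrite <- Hn. unfold d_t. field. apply Rgt_not_eq, (inside_r_pos t R HO).
Qed.

Lemma einstein_equations t R : inside t R ->
  d_R (d_t r) t R = d_t Psi t R * d_R r t R /\
  RicSph11 Psi r t R / exp (2 * Psi t R) = RicSph22 Psi r t R / r t R ^ 2 /\
  rho t R = RicSph00 Psi r t R + RicSph11 Psi r t R / exp (2 * Psi t R).
Proof.
  intros HO. field_eqs_at HO. destruct HE as (_ & _ & _ & Hein & _).
  assert (H00 := Hein 0%nat 0%nat ltac:(lia) ltac:(lia)).
  assert (H01 := Hein 0%nat 1%nat ltac:(lia) ltac:(lia)).
  assert (H11 := Hein 1%nat 1%nat ltac:(lia) ltac:(lia)).
  assert (H22 := Hein 2%nat 2%nat ltac:(lia) ltac:(lia)).
  clear Hein.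
  assert (Hr := Rgt_not_eq _ _ (inside_r_pos t R HO)).
  rewrite (Ricci_gSph_00 Phi Psi r equatorial_region) in H00 by equatorial_side_condition.
  rewrite (Ricci_gSph_01 Phi Psi r equatorial_region) in H01 by equatorial_side_condition.
  rewrite (Ricci_gSph_11 Phi Psi r equatorial_region) in H11 by equatorial_side_condition.
  rewrite (Ricci_gSph_22 Phi Psi r equatorial_region) in H22 by equatorial_side_condition.
  set (S := Scal _ _ _) in *.
  unfold lower, sum4, sum_f_R0, gSph, uSph, lift in H00, H01, H11, H22.
  cbn [equator_pt] in H00, H01, H11, H22.
  rewrite (inside_Phi0 t R HO), ?Rmult_0_r, ?Ropp_0, ?exp_0 in H00, H01, H11, H22.
  assert (EE := exp_neq_0 (2 * Psi t R)).
  assert (Er2 : r t R ^ 2 <> 0) by (apply pow_nonzero; exact Hr).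
  assert (HS1 : / 2 * S = RicSph11 Psi r t R / exp (2 * Psi t R) + phi t R)
    by (apply solve_half_scalar; [exact EE | lra]).
  assert (HS2 : / 2 * S = RicSph22 Psi r t R / r t R ^ 2 + phi t R)
    by (apply solve_half_scalar; [exact Er2 | lra]).
  split; [|split]; [| lra | lra].
  assert (Hprod : -2 / r t R * (d_R (d_t r) t R - d_t Psi t R * d_R r t R) = 0).
  { unfold RicSph01 in H01.
    transitivity (-2 * (d_R (d_t r) t R - d_t Psi t R * d_R r t R) / r t R); [field; exact Hr | lra]. }
  apply Rmult_integral in Hprod as [Hc|Hc]; [|lra].
  exfalso. apply (Rmult_integral_contrapositive (-2) (/ r t R)); [|exact Hc].
  split; [lra | now apply Rinv_neq_0_compat].
Qed.

Definition Rref := Rb / 2.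

Lemma Rref_bounds : 0 < Rref < Rb.
Proof. unfold Rref; lra. Qed.

Lemma inside_Rref t R : inside t R -> inside t Rref.
Proof. intros (? & ? & _). repeat split; auto; apply Rref_bounds. Qed.

Lemma phi_radially_const t R : inside t R -> phi t R = phi t Rref.
Proof.
  intros (H1 & H2 & H3).
  apply (null_derivative_open (fun v => phi t v) 0 Rb); [|exact H3 | apply Rref_bounds].
  intros v Hv. apply Derive_0_is_derive; [smooth_ex_derive|].
  apply phi_equations. repeat split; auto; lra.
Qed.

(* [n] is (up to the factor [- sigma]) the time derivative of the radially constant [phi]. *)
Lemma n_radially_const t R : inside t R -> n t R = n t Rref.
Proof.
  intros HO. assert (HO' := inside_Rref t R HO).
  assert (E : d_t phi t R = d_t phi t Rref).
  { apply Derive_ext_loc. destruct HO as (H1 & H2 & H3).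
    generalize (locally_pos_Rbar_lt T t H1 H2). apply filter_imp. intros s [Hs1 Hs2].
    apply phi_radially_const. repeat split; auto; lra. }
  rewrite (proj2 (phi_equations t R HO)), (proj2 (phi_equations t Rref HO')) in E.
  apply (Rmult_eq_reg_l (- sigma)); [exact E | lra].
Qed.

Lemma radially_const_closure (f : R -> R -> R) : smooth_on f U ->
  (forall t R, inside t R -> f t R = f t Rref) ->
  forall t R, 0 <= t -> Rbar_lt t T -> 0 <= R < Rb -> f t R = f t Rref.
Proof.
  intros Hf Hin.
  assert (Hpos : forall s v, 0 < s -> Rbar_lt s T -> 0 <= v < Rb -> f s v = f s Rref).
  { intros s v H1 H2 H3. destruct (Req_dec v 0) as [->|E]; [|apply Hin; repeat split; auto; lra].
    apply (eq_at_right_limit (fun w => f s w) (fun _ => f s Rref) 0 Rb);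
      [| apply continuity_pt_const; now intros ? ? | exact HRb |].
    - apply continuity_2d_pt_snd, (smooth_continuity_2d _ U); [assumption | in_U].
    - intros w Hw. apply Hin. repeat split; auto; lra. }
  intros t R H1 H2 H3. destruct (Req_dec t 0) as [->|E]; [|apply Hpos; auto; lra].
  destruct (Rbar_lt_right_interval T 0 H2) as [beta [Hb Hbt]].
  pose proof Rref_bounds.
  apply (eq_at_right_limit (fun u => f u R) (fun u => f u Rref) 0 beta); [| | exact Hb |].
  - apply continuity_2d_pt_fst, (smooth_continuity_2d _ U); [assumption | in_U].
  - apply continuity_2d_pt_fst, (smooth_continuity_2d _ U); [assumption | in_U].
  - intros u Hu. apply Hpos; [lra | apply Hbt; lra | exact H3].
Qed.

Lemma n_comoving_conservation t R : 0 <= t -> Rbar_lt t T -> 0 < R < Rb ->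
  n t R * exp (Psi t R) * r t R ^ 2 = n 0 R * exp (Psi 0 R) * R ^ 2.
Proof.
  intros H1 H2 H3. replace (R ^ 2) with (r 0 R ^ 2) by (rewrite r_initial; auto; lra).
  destruct (Req_dec t 0) as [->|E]; [reflexivity|].
  symmetry. apply (null_derivative_eq (fun s => n s R * exp (Psi s R) * r s R ^ 2) 0 t); [lra| |].
  - intros s Hs. assert (HO : inside s R).
    { repeat split; [lra | apply (Rbar_lt_le_compat T s t); [lra | exact H2] | lra | lra]. }
    assert (En := n_conservation s R HO). assert (Er := inside_r_pos s R HO).
    auto_derive; [repeat split; smooth_ex_derive|].
    unfold d_t in En. rewrite <- (Rmult_0_r (exp (Psi s R) * r s R ^ 2)), <- En.
    field. lra.
  - intros s Hs. assert (Hst : Rbar_lt s T) by (apply (Rbar_lt_le_compat T s t); [lra | exact H2]).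
    apply ex_derive_continuity_pt. auto_derive. repeat split; smooth_ex_derive.
Qed.

Lemma r_center t : 0 <= t -> Rbar_lt t T -> r t 0 = 0.
Proof.
  intros H1 H2.
  assert (E : n t 0 * exp (Psi t 0) * r t 0 ^ 2 = n 0 0 * exp (Psi 0 0) * 0 ^ 2).
  { apply (eq_at_right_limit (fun v => n t v * exp (Psi t v) * r t v ^ 2)
                             (fun v => n 0 v * exp (Psi 0 v) * v ^ 2) 0 Rb);
      [| | exact HRb | intros v Hv; apply n_comoving_conservation; auto; lra];
      apply ex_derive_continuity_pt; auto_derive; repeat split; smooth_ex_derive. }
  destruct (rho_n_neq0 t 0 H1 H2 ltac:(lra)) as [_ Hn].
  assert (Hn' : n t 0 * exp (Psi t 0) <> 0)
    by (apply Rmult_integral_contrapositive; split; [exact Hn | apply exp_neq_0]).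
  rewrite pow_i, Rmult_0_r in E by lia.
  apply Rmult_integral in E as [E|E]; [contradiction|].
  destruct (Req_dec (r t 0) 0) as [Hr0|Hr0]; [exact Hr0|].
  exfalso. exact (pow_nonzero _ 2 Hr0 E).
Qed.

Definition n_ref t := n t Rref.

Lemma n_homogeneous t R : 0 <= t -> Rbar_lt t T -> 0 <= R < Rb -> n t R = n_ref t.
Proof. apply radially_const_closure; [exact sn | exact n_radially_const]. Qed.

Lemma dt_n_inside t R : inside t R -> d_t n t R = Derive n_ref t.
Proof.
  intros (H1 & H2 & H3). apply Derive_ext_loc.
  generalize (locally_pos_Rbar_lt T t H1 H2). apply filter_imp. intros s [Hs1 Hs2].
  apply n_radially_const. repeat split; auto; lra.
Qed.

Lemma n_ref_neq0 t : 0 <= t -> Rbar_lt t T -> n_ref t <> 0.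
Proof. intros H1 H2. apply (rho_n_neq0 t Rref H1 H2). generalize Rref_bounds; lra. Qed.

(* With [n] homogeneous, the [01] Einstein equation and particle conservation make
   [r^2 d_t r + (n'/(3n)) r^3] independent of [R]; it vanishes at the centre. *)
Lemma areal_volume_rate t R : inside t R ->
  r t R ^ 2 * d_t r t R + Derive n_ref t / (3 * n_ref t) * r t R ^ 3 = 0.
Proof.
  intros (H1 & H2 & H3). assert (Hn := n_ref_neq0 t ltac:(lra) H2).
  set (c := Derive n_ref t / (3 * n_ref t)).
  assert (E : r t 0 ^ 2 * d_t r t 0 + c * r t 0 ^ 3 = r t R ^ 2 * d_t r t R + c * r t R ^ 3).
  { apply (null_derivative_eq (fun v => r t v ^ 2 * d_t r t v + c * r t v ^ 3) 0 R); [lra| |].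
    - intros v Hv. assert (HOv : inside t v) by (repeat split; auto; lra).
      destruct (einstein_equations t v HOv) as [E01 _]. assert (En := n_conservation t v HOv).
      rewrite (dt_n_inside t v HOv), (n_homogeneous t v ltac:(lra) H2 ltac:(lra)) in En.
      assert (Er := inside_r_pos t v HOv).
      assert (Hp : d_t Psi t v = - Derive n_ref t / n_ref t - 2 * d_t r t v / r t v).
      { apply (Rmult_eq_reg_l (n_ref t)); [|exact Hn].
        transitivity (- Derive n_ref t - n_ref t * (2 * d_t r t v / r t v)); [|field; lra].
        rewrite Rmult_plus_distr_l in En. lra. }
      auto_derive; [repeat split; smooth_ex_derive|].
      change (Derive (fun x => d_t r t x) v) with (d_R (d_t r) t v).
      change (Derive (fun x => r t x) v) with (d_R r t v).
      rewrite E01, Hp. unfold c. field. lra.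
    - intros v Hv. apply ex_derive_continuity_pt. auto_derive. repeat split; smooth_ex_derive. }
  rewrite r_center in E by (auto; lra). rewrite <- E. ring.
Qed.

Lemma n_ref_r3_conservation t R : 0 <= t -> Rbar_lt t T -> 0 < R < Rb ->
  n_ref t * r t R ^ 3 = n_ref 0 * R ^ 3.
Proof.
  intros H1 H2 H3. replace (R ^ 3) with (r 0 R ^ 3) by (rewrite r_initial; auto; lra).
  destruct (Req_dec t 0) as [->|E]; [reflexivity|].
  pose proof Rref_bounds.
  symmetry. apply (null_derivative_eq (fun s => n_ref s * r s R ^ 3) 0 t); [lra| |].
  - intros s Hs. assert (Hst : Rbar_lt s T) by (apply (Rbar_lt_le_compat T s t); [lra | exact H2]).
    assert (Z := areal_volume_rate s R ltac:(repeat split; auto; lra)).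
    assert (Hn := n_ref_neq0 s ltac:(lra) Hst).
    auto_derive; [repeat split; unfold n_ref; smooth_ex_derive|].
    change (Derive (fun x => n_ref x) s) with (Derive n_ref s). unfold d_t in Z.
    transitivity (3 * n_ref s * (r s R ^ 2 * Derive (fun x => r x R) s
                                 + Derive n_ref s / (3 * n_ref s) * r s R ^ 3));
      [field; exact Hn | rewrite Z; ring].
  - intros s Hs. assert (Hst : Rbar_lt s T) by (apply (Rbar_lt_le_compat T s t); [lra | exact H2]).
    apply ex_derive_continuity_pt. auto_derive. repeat split; unfold n_ref; smooth_ex_derive.
Qed.

Definition a t := r t Rref / Rref.

Lemma a_pos t : 0 <= t -> Rbar_lt t T -> 0 < a t.
Proof.
  intros H1 H2. pose proof Rref_bounds.
  apply Rdiv_lt_0_compat; [apply r_pos; auto | ]; lra.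
Qed.

Lemma r_scale t R : 0 <= t -> Rbar_lt t T -> 0 <= R < Rb -> r t R = a t * R.
Proof.
  intros H1 H2 H3. pose proof Rref_bounds. destruct (Req_dec R 0) as [->|E].
  { rewrite r_center by auto. ring. }
  assert (Y1 := n_ref_r3_conservation t R H1 H2 ltac:(lra)).
  assert (Y2 := n_ref_r3_conservation t Rref H1 H2 Rref_bounds).
  assert (Hn := n_ref_neq0 t H1 H2).
  assert (P1 := r_pos t R H1 H2 ltac:(lra)). assert (P2 := r_pos t Rref H1 H2 Rref_bounds).
  unfold a. apply (Rmult_eq_reg_r Rref); [|lra].
  replace (r t Rref / Rref * R * Rref) with (r t Rref * R) by (field; lra).
  apply pow3_inj; [nra | nra |]. apply (Rmult_eq_reg_l (n_ref t)); [|exact Hn].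
  rewrite !Rpow_mult_distr.
  transitivity ((n_ref t * r t R ^ 3) * Rref ^ 3); [ring|].
  rewrite Y1. transitivity ((n_ref t * r t Rref ^ 3) * R ^ 3); [rewrite Y2|]; ring.
Qed.

Lemma n_ref_scale t : 0 <= t -> Rbar_lt t T -> n_ref 0 = n_ref t * a t ^ 3.
Proof.
  intros H1 H2. pose proof Rref_bounds.
  assert (Y := n_ref_r3_conservation t Rref H1 H2 Rref_bounds).
  rewrite (r_scale t Rref H1 H2 ltac:(lra)) in Y.
  apply (Rmult_eq_reg_r (Rref ^ 3)); [rewrite <- Y; ring | apply pow_nonzero; lra].
Qed.

Lemma exp_Psi_scale t R : 0 <= t -> Rbar_lt t T -> 0 < R < Rb ->
  exp (Psi t R) = a t * exp (Psi 0 R).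
Proof.
  intros H1 H2 H3. assert (Q := n_comoving_conservation t R H1 H2 H3).
  rewrite (n_homogeneous t R H1 H2 ltac:(lra)), (n_homogeneous 0 R ltac:(lra) HT ltac:(lra)) in Q.
  rewrite (r_scale t R H1 H2 ltac:(lra)), (n_ref_scale t H1 H2) in Q.
  assert (Hn := n_ref_neq0 t H1 H2). assert (Ha := a_pos t H1 H2).
  apply (Rmult_eq_reg_l (n_ref t * a t ^ 2 * R ^ 2)).
  - transitivity (n_ref t * exp (Psi t R) * (a t * R) ^ 2); [ring|]. rewrite Q. ring.
  - apply Rmult_integral_contrapositive; split;
      [apply Rmult_integral_contrapositive; split; [exact Hn|] |]; apply pow_nonzero; lra.
Qed.

Definition a_dot t := d_t r t Rref / Rref.
Definition a_ddot t := d_t (d_t r) t Rref / Rref.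

Lemma is_derive_a t : 0 <= t -> Rbar_lt t T -> is_derive a t (a_dot t).
Proof.
  intros H1 H2. pose proof Rref_bounds. unfold a, a_dot.
  auto_derive; [smooth_ex_derive | unfold d_t; field; lra].
Qed.

Lemma is_derive_a_dot t : 0 <= t -> Rbar_lt t T -> is_derive a_dot t (a_ddot t).
Proof.
  intros H1 H2. pose proof Rref_bounds. unfold a_dot, a_ddot.
  auto_derive; [smooth_ex_derive | unfold d_t at 2; field; lra].
Qed.

Lemma locally_inside_t t R : inside t R -> locally t (fun s => inside s R).
Proof.
  intros (H1 & H2 & H3). generalize (locally_pos_Rbar_lt T t H1 H2).
  apply filter_imp. intros s [? ?]. repeat split; auto; lra.
Qed.

Lemma locally_inside_R t R : inside t R -> locally R (fun v => inside t v).
Proof.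
  intros (H1 & H2 & H3). generalize (locally_open_interval 0 Rb R H3).
  apply filter_imp. intros v Hv. repeat split; auto; lra.
Qed.

Local Ltac inside_bounds HO := let H1 := fresh "H1" in let H2 := fresh "H2" in
  let H3 := fresh "H3" in pose proof HO as (H1 & H2 & H3).

Lemma dt_r_inside t R : inside t R -> d_t r t R = a_dot t * R.
Proof.
  intros HO. inside_bounds HO. unfold d_t. rewrite (Derive_ext_loc _ (fun s => a s * R)).
  - apply is_derive_unique. apply (is_derive_scal_l a t (a_dot t) R), is_derive_a; auto; lra.
  - generalize (locally_inside_t t R HO). apply filter_imp.
    intros s (? & ? & ?). apply r_scale; auto; lra.
Qed.

Lemma dtt_r_inside t R : inside t R -> d_t (d_t r) t R = a_ddot t * R.
Proof.
  intros HO. inside_bounds HO. unfold d_t at 1. rewrite (Derive_ext_loc _ (fun s => a_dot s * R)).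
  - apply is_derive_unique. apply (is_derive_scal_l a_dot t (a_ddot t) R), is_derive_a_dot; auto; lra.
  - generalize (locally_inside_t t R HO). apply filter_imp. intros s Hs. apply dt_r_inside, Hs.
Qed.

Lemma dR_r_inside t R : inside t R -> d_R r t R = a t.
Proof.
  intros HO. inside_bounds HO. unfold d_R. rewrite (Derive_ext_loc _ (fun v => a t * v)).
  - apply is_derive_unique. auto_derive; [exact I | ring].
  - generalize (locally_inside_R t R HO). apply filter_imp.
    intros v (? & ? & ?). apply r_scale; auto; lra.
Qed.

Lemma dRR_r_inside t R : inside t R -> d_R (d_R r) t R = 0.
Proof.
  intros HO. unfold d_R at 1. rewrite (Derive_ext_loc _ (fun _ => a t)); [apply Derive_const|].
  generalize (locally_inside_R t R HO). apply filter_imp. intros v Hv. apply dR_r_inside, Hv.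
Qed.

Lemma Psi_scale t R : 0 <= t -> Rbar_lt t T -> 0 < R < Rb -> Psi t R = ln (a t) + Psi 0 R.
Proof.
  intros H1 H2 H3. rewrite <- (ln_exp (Psi t R)), exp_Psi_scale, ln_mult, ln_exp by
    (auto using a_pos, exp_pos). reflexivity.
Qed.

Lemma exp_2Psi_scale t R : 0 <= t -> Rbar_lt t T -> 0 < R < Rb ->
  exp (2 * Psi t R) = a t ^ 2 * exp (2 * Psi 0 R).
Proof.
  intros H1 H2 H3. rewrite Psi_scale by auto.
  replace (2 * (ln (a t) + Psi 0 R)) with (ln (a t) + ln (a t) + 2 * Psi 0 R) by ring.
  rewrite !exp_plus, exp_ln by (apply a_pos; auto). ring.
Qed.

Lemma dt_Psi_inside t R : inside t R -> d_t Psi t R = a_dot t / a t.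
Proof.
  intros HO. inside_bounds HO. unfold d_t. rewrite (Derive_ext_loc _ (fun s => ln (a s) + Psi 0 R)).
  - assert (Ha := a_pos t ltac:(lra) H2). assert (Hd := is_derive_a t ltac:(lra) H2).
    apply is_derive_unique. auto_derive; [repeat split; [eexists; exact Hd | exact Ha] |].
    change (Derive (fun x => a x) t) with (Derive a t). rewrite (is_derive_unique _ _ _ Hd).
    field. lra.
  - generalize (locally_inside_t t R HO). apply filter_imp.
    intros s (? & ? & ?). apply Psi_scale; auto; lra.
Qed.

Lemma dtt_Psi_inside t R : inside t R -> d_t (d_t Psi) t R = (a_ddot t * a t - a_dot t ^ 2) / a t ^ 2.
Proof.
  intros HO. inside_bounds HO. unfold d_t at 1.
  rewrite (Derive_ext_loc _ (fun s => a_dot s / a s)).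
  - assert (Ha := a_pos t ltac:(lra) H2).
    assert (Hd := is_derive_a t ltac:(lra) H2). assert (Hd' := is_derive_a_dot t ltac:(lra) H2).
    apply is_derive_unique.
    auto_derive; [repeat split; [eexists; exact Hd' | eexists; exact Hd | lra] |].
    change (Derive (fun x => a x) t) with (Derive a t).
    change (Derive (fun x => a_dot x) t) with (Derive a_dot t).
    rewrite (is_derive_unique _ _ _ Hd), (is_derive_unique _ _ _ Hd'). field. lra.
  - generalize (locally_inside_t t R HO). apply filter_imp. intros s Hs. apply dt_Psi_inside, Hs.
Qed.

Lemma dR_Psi_inside t R : inside t R -> d_R Psi t R = d_R Psi 0 R.
Proof.
  intros HO. inside_bounds HO. unfold d_R. rewrite (Derive_ext_loc _ (fun v => ln (a t) + Psi 0 v)).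
  - apply is_derive_unique. auto_derive; [smooth_ex_derive | ring].
  - generalize (locally_inside_R t R HO). apply filter_imp.
    intros v (? & ? & ?). apply Psi_scale; auto; lra.
Qed.

Local Ltac rewrite_scale_in t R HO H :=
  inside_bounds HO;
  unfold RicSph00, RicSph11, RicSph22 in H;
  rewrite (dtt_Psi_inside t R HO), (dt_Psi_inside t R HO), (dtt_r_inside t R HO), (dt_r_inside t R HO),
    (dRR_r_inside t R HO), (dR_r_inside t R HO), (dR_Psi_inside t R HO),
    (exp_2Psi_scale t R ltac:(lra) ltac:(assumption) ltac:(lra)),
    (r_scale t R ltac:(lra) ltac:(assumption) ltac:(lra)) in H.

Lemma exists_inner_time : exists ts, 0 < ts /\ Rbar_lt ts T.
Proof.
  destruct (Rbar_lt_right_interval T 0 HT) as [beta [Hb Hbt]].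
  exists (beta / 2). split; [lra | apply Hbt; lra].
Qed.

(* The [11] and [22] Einstein equations both determine the scalar curvature; at any
   positive time their agreement reduces to this equation for the initial data. *)
Lemma dR_Psi_initial R : 0 < R < Rb -> R * d_R Psi 0 R = exp (2 * Psi 0 R) - 1.
Proof.
  intros HR. destruct exists_inner_time as [ts [Hts HtsT]].
  assert (HO : inside ts R) by (repeat split; auto; lra).
  destruct (einstein_equations ts R HO) as [_ [E _]]. rewrite_scale_in ts R HO E.
  assert (Ha := a_pos ts ltac:(lra) HtsT). assert (HG := exp_pos (2 * Psi 0 R)).
  set (G := exp (2 * Psi 0 R)) in *. set (p := d_R Psi 0 R) in *.
  match type of E with ?L = ?M =>
    assert (K : L - M = (R * p - (G - 1)) / (a ts ^ 2 * R ^ 2 * G)) by (field; repeat split; lra) end.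
  rewrite E, Rminus_diag in K.
  assert (Hd : 0 < a ts ^ 2 * R ^ 2 * G)
    by (apply Rmult_lt_0_compat; [apply Rmult_lt_0_compat; apply pow_lt|]; lra).
  apply (Rmult_eq_reg_r (/ (a ts ^ 2 * R ^ 2 * G))); [|apply Rinv_neq_0_compat; lra].
  apply Rminus_diag_uniq. rewrite <- Rmult_minus_distr_r. rewrite K. field. lra.
Qed.

Definition curvature_at v := (1 - exp (- (2 * Psi 0 v))) / v ^ 2.
Definition k := curvature_at Rref.

Lemma exp_neg2Psi_initial v : 0 < v < Rb -> exp (- (2 * Psi 0 v)) = 1 - k * v ^ 2.
Proof.
  intros Hv.
  assert (E : curvature_at v = k).
  { apply (null_derivative_open curvature_at 0 Rb); [|exact Hv | apply Rref_bounds].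
    intros x Hx. unfold curvature_at. assert (P := dR_Psi_initial x Hx).
    auto_derive; [split; [smooth_ex_derive | split; [nra | exact I]]|].
    change (Derive (fun y => Psi 0 y) x) with (d_R Psi 0 x).
    replace (d_R Psi 0 x) with ((exp (2 * Psi 0 x) - 1) / x) by (rewrite <- P; field; lra).
    rewrite exp_Ropp. assert (HG := exp_pos (2 * Psi 0 x)). field. lra. }
  unfold curvature_at in E. rewrite <- E. field. lra.
Qed.

Lemma rho_friedmann t R : inside t R ->
  rho t R = -2 * a_ddot t / a t + 2 * (a_dot t ^ 2 + k) / a t ^ 2.
Proof.
  intros HO. destruct (einstein_equations t R HO) as [_ [_ E]]. rewrite_scale_in t R HO E.
  assert (P := dR_Psi_initial R H3). assert (Gk := exp_neg2Psi_initial R H3).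
  assert (Ha := a_pos t ltac:(lra) H2).
  assert (HK : 0 < 1 - k * R ^ 2) by (rewrite <- Gk; apply exp_pos).
  replace (d_R Psi 0 R) with ((exp (2 * Psi 0 R) - 1) / R) in E by (rewrite <- P; field; lra).
  replace (exp (2 * Psi 0 R)) with (/ (1 - k * R ^ 2)) in E
    by (rewrite <- Gk, <- exp_Ropp; f_equal; ring).
  rewrite E. field. repeat split; lra.
Qed.

Lemma rho_radially_const t R : inside t R -> rho t R = rho t Rref.
Proof.
  intros HO. rewrite (rho_friedmann t R HO), (rho_friedmann t Rref (inside_Rref t R HO)).
  reflexivity.
Qed.

Lemma one_minus_kR2_pos R : 0 <= R < Rb -> 0 < 1 - k * R ^ 2.
Proof.
  intros HR. destruct (Req_dec R 0) as [->|E]; [simpl; lra|].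
  rewrite <- exp_neg2Psi_initial by lra. apply exp_pos.
Qed.

Lemma exp_2Psi_FLRW_off_center t R : 0 <= t -> Rbar_lt t T -> 0 < R < Rb ->
  exp (2 * Psi t R) = a t ^ 2 / (1 - k * R ^ 2).
Proof.
  intros H1 H2 H3. rewrite exp_2Psi_scale, <- exp_neg2Psi_initial, exp_Ropp by auto.
  field. apply exp_neq_0.
Qed.

Lemma exp_2Psi_FLRW t R : 0 <= t -> Rbar_lt t T -> 0 <= R < Rb ->
  exp (2 * Psi t R) = a t ^ 2 / (1 - k * R ^ 2).
Proof.
  intros H1 H2 H3. destruct (Req_dec R 0) as [->|E]; [|apply exp_2Psi_FLRW_off_center; auto; lra].
  apply (eq_at_right_limit (fun v => exp (2 * Psi t v)) (fun v => a t ^ 2 / (1 - k * v ^ 2)) 0 Rb);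
    [| | exact HRb | intros v Hv; apply exp_2Psi_FLRW_off_center; auto; lra];
    apply ex_derive_continuity_pt; auto_derive; repeat split; [smooth_ex_derive|].
  simpl; lra.
Qed.

Lemma dust_FLRW :
  (forall t R R', 0 <= t -> Rbar_lt t T -> 0 <= R < Rb -> 0 <= R' < Rb ->
     rho t R = rho t R' /\ n t R = n t R' /\ phi t R = phi t R') /\
  (forall t, 0 <= t -> Rbar_lt t T -> 0 < a t) /\
  (forall x : point, 0 <= x 0%nat -> Rbar_lt (x 0%nat) T -> 0 <= x 1%nat < Rb ->
     0 < 1 - k * (x 1%nat) ^ 2 /\
     (forall m nu, gSph Phi Psi r x m nu = gFLRW a k x m nu) /\
     (forall m, uSph Phi x m = uStatic x m)).
Proof.
  split; [|split; [exact a_pos|]].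
  - intros t R R' H1 H2 H3 H4.
    assert (Hc : forall f, smooth_on f U -> (forall s v, inside s v -> f s v = f s Rref) ->
                 f t R = f t R').
    { intros f Hf Hin.
      now rewrite (radially_const_closure f Hf Hin t R), (radially_const_closure f Hf Hin t R'). }
    repeat split; apply Hc; auto using rho_radially_const, n_radially_const, phi_radially_const.
  - intros x H1 H2 H3.
    assert (HPhi : Phi (x 0%nat) (x 1%nat) = 0) by (apply Phi_vanishes; auto; lra).
    split; [now apply one_minus_kR2_pos | split].
    + intros m nu. destruct m as [|[|[|[|m]]]], nu as [|[|[|[|nu]]]]; cbn [gSph gFLRW]; try reflexivity.
      * rewrite HPhi, Rmult_0_r, exp_0. reflexivity.
      * now apply exp_2Psi_FLRW.
      * rewrite r_scale by auto. ring.
      * rewrite r_scale by auto. ring.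
    + intros [|m]; cbn [uSph uStatic]; [|reflexivity]. rewrite HPhi, Ropp_0, exp_0. reflexivity.
Qed.

End DustFLRW.

Theorem mainTheorem1
  (T : Rbar) (Rb sigma : R)
  (Phi Psi r rho n phi : R -> R -> R)
  (U : R -> R -> Prop) :
  Rbar_lt 0 T -> 0 < Rb -> 0 < sigma ->
  (* regularity: all unknowns smooth on an open set containing [0,T) x [0,Rb] *)
  open2 U ->
  (forall t R, 0 <= t -> Rbar_lt t T -> 0 <= R <= Rb -> U t R) ->
  smooth_on Phi U -> smooth_on Psi U -> smooth_on r U ->
  smooth_on rho U -> smooth_on n U -> smooth_on phi U ->
  (* nondegeneracy of the areal radius away from the center *)
  (forall t R, 0 <= t -> Rbar_lt t T -> 0 < R < Rb -> 0 < r t R) ->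
  (* normalization of the coordinates *)
  (forall t, 0 <= t -> Rbar_lt t T -> Phi t Rb = 0) ->
  (forall R, 0 <= R < Rb -> r 0 R = R) ->
  (* rho and n nowhere vanishing on V *)
  (forall t R, 0 <= t -> Rbar_lt t T -> 0 <= R < Rb -> rho t R <> 0 /\ n t R <> 0) ->
  (* the field equations at every point of the chart *)
  (forall x : point,
      0 < x 0%nat -> Rbar_lt (x 0%nat) T -> 0 < x 1%nat < Rb -> 0 < x 2%nat < PI ->
      let g := gSph Phi Psi r in
      let gi := gSphInv Phi Psi r in
      let u := uSph Phi in
      (* nabla_mu (rho u^mu) = sigma n *)
      cov_div g gi (fun y m => lift rho y * u y m) x = sigma * lift n x /\
      (* rho u^mu nabla_mu u^nu = 0 *)
      (forall nu, (nu <= 3)%nat -> lift rho x * accel g gi u x nu = 0) /\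
      (* nabla_mu (n u^mu) = 0 *)
      cov_div g gi (fun y m => lift n y * u y m) x = 0 /\
      (* Einstein equations with T_{mu nu} = rho u_mu u_nu *)
      (forall m nu, (m <= 3)%nat -> (nu <= 3)%nat ->
         Ricci g gi x m nu - / 2 * g x m nu * Scal g gi x + lift phi x * g x m nu
         = lift rho x * lower g u x m * lower g u x nu) /\
      (* nabla_nu phi = sigma J_nu, J^mu = n u^mu *)
      (forall nu, (nu <= 3)%nat ->
         pd (lift phi) nu x = sigma * lower g (fun y m => lift n y * u y m) x nu)) ->
  (* conclusion *)
  (forall t R R', 0 <= t -> Rbar_lt t T -> 0 <= R < Rb -> 0 <= R' < Rb ->
     rho t R = rho t R' /\ n t R = n t R' /\ phi t R = phi t R') /\
  exists (a : R -> R) (k : R),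
    (forall t, 0 <= t -> Rbar_lt t T -> 0 < a t) /\
    (forall x : point, 0 <= x 0%nat -> Rbar_lt (x 0%nat) T -> 0 <= x 1%nat < Rb ->
       0 < 1 - k * (x 1%nat) ^ 2 /\
       (forall m nu, gSph Phi Psi r x m nu = gFLRW a k x m nu) /\
       (forall m, uSph Phi x m = uStatic x m)).
Proof.
  intros HT HRb Hsigma _ HU sPhi sPsi sr srho sn sphi r_pos Phi_boundary r_initial rho_n_neq0
    field_eqs.
  destruct (dust_FLRW T Rb sigma Phi Psi r rho n phi U HT HRb Hsigma HU sPhi sPsi sr srho sn sphi
              r_pos Phi_boundary r_initial rho_n_neq0 field_eqs) as (Hhomogeneous & Ha & HFLRW).
  split; [exact Hhomogeneous|].
  exists (a Rb r), (k Rb Psi). split; [exact Ha | exact HFLRW].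
Qed.
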